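(* Consider the FDMA/TDMA scheme at the serving AP of a typical UE, where the typical UE is the first UE in the ordering and is assigned SC 1, and $K_0\ge 0$ other UEs follow it in the ordering. For $l\ge 0$ let $\mathcal{A}_l$ be the event that exactly $l$ of the other $K_0$ UEs are assigned SC 1 (so the delay is $L=l$). Then $$\Pr\{\mathcal{A}_0\mid K_0\}=\begin{cases}1,& 0\le K_0\le N-1,\\ \frac{2N-K_0-1}{N},& N\le K_0\le 2N-2,\\ 0,& K_0\ge 2N-1,\end{cases}$$ and for $l\ge 1$ $$\Pr\{\mathcal{A}_l\mid K_0\}=\begin{cases}0,& 0\le K_0\le lN-1,\\ \frac{K_0-lN+1}{N},& lN\le K_0\le (l+1)N-1,\\ \frac{(l+2)N-K_0-1}{N},& (l+1)N\le K_0\le (l+2)N-2,\\ 0,& K_0\ge (l+2)N-1.\end{cases}$$ Consequently, if $K_0$ is random with PMF $$\Pr\{K_0=k\}=\frac{3.5^{4.5}\,\Gamma(k+4.5)\,\tau^{4.5}}{\Gamma(4.5)\,k!\,(1+3.5\tau)^{k+4.5}},\quad k\ge 0,$$ and independent of the scheduling randomness, then $\Pr\{L=l\}=\sum_{k\ge 0}\Pr\{K_0=k\}\Pr\{\mathcal{A}_l\mid K_0=k\}$.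
   Context: There are $N\ge1$ subchannels (SCs). FDMA/TDMA scheme: the UEs of an AP are arranged in an order and split into consecutive blocks of $N$ UEs (the last block possibly smaller); within each block the UEs, in order, are assigned SCs sequentially uniformly at random without replacement from $\{1,\dots,N\}$, the available set being reset to $\{1,\dots,N\}$ at the start of each block; assignments are independent across blocks. UEs sharing an SC are time-multiplexed on it. Here the serving AP has $K_0+1$ UEs in total: the typical UE first (assigned SC 1), followed by $K_0$ other UEs in random order. The delay $L$ of the typical UE is the number of other UEs sharing its SC. *)

From Stdlib Require Import Reals.
From mathcomp Require Import all_boot.

Set Implicit Arguments.
Unset Strict Implicit.
Unset Printing Implicit Defensive.

Definition sumR {T : Type} (s : seq T) (f : T -> R) : R :=
  foldr (fun x acc => Rplus (f x) acc) R0 s.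
Definition prodR {T : Type} (s : seq T) (f : T -> R) : R :=
  foldr (fun x acc => Rmult (f x) acc) R1 s.

(* UEs of the serving AP are indexed 0..K0 in the scheduling order:
   index 0 is the typical UE, indices 1..K0 are the other UEs.
   SCs are indexed 0..N-1; "SC 1" of the paper is index 0.
   An SC assignment is a finite function UE -> SC. *)
Definition asg (N K0 : nat) := {ffun 'I_K0.+1 -> 'I_N}.

Definition blk (N : nat) (i : nat) : nat := i %/ N.
Definition pos (N : nat) (i : nat) : nat := i %% N.

Definition used (N K0 : nat) (a : asg N K0) (i : 'I_K0.+1) : seq 'I_N :=
  [seq a j | j : 'I_K0.+1 <- enum 'I_K0.+1 & (j < i) && (blk N j == blk N i)].

(* Sequential sampling without replacement inside a block (available set
   reset at each block start): UE i draws uniformly from the N - pos(i)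
   SCs not yet used in its block. *)
Definition step_prob (N K0 : nat) (a : asg N K0) (i : 'I_K0.+1) : R :=
  if a i \in used a i then R0 else Rinv (INR (N - pos N i)).

Definition asg_prob (N K0 : nat) (a : asg N K0) : R :=
  prodR (enum 'I_K0.+1) (step_prob a).

Definition nb_sc1_others (N K0 : nat) (a : asg N K0) : nat :=
  count (fun i : 'I_K0.+1 => (i != ord0) && (nat_of_ord (a i) == 0))
        (enum 'I_K0.+1).

Definition typ_sc1 (N K0 : nat) (a : asg N K0) : bool :=
  nat_of_ord (a ord0) == 0.

Definition PrA (N K0 l : nat) : R :=
  Rdiv (sumR (enum {: asg N K0})
          (fun a => if typ_sc1 a && (nb_sc1_others a == l) then asg_prob a else R0))
       (sumR (enum {: asg N K0})
          (fun a => if typ_sc1 a then asg_prob a else R0)).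

(* Gamma(k + 4.5) / Gamma(4.5) = rising factorial (4.5)(5.5)...(4.5+k-1). *)
Definition gamma_ratio (k : nat) : R :=
  prodR (iota 0 k) (fun j => Rplus (Rdiv 9 2) (INR j)).

Definition pK (tau : R) (k : nat) : R :=
  Rdiv (Rmult (Rmult (Rpower (Rdiv 7 2) (Rdiv 9 2)) (gamma_ratio k))
              (Rpower tau (Rdiv 9 2)))
       (Rmult (INR (k`!))
              (Rpower (Rplus 1 (Rmult (Rdiv 7 2) tau)) (Rplus (INR k) (Rdiv 9 2)))).

(* Joint model: K0 ~ pK tau, independent of the scheduling; given K0 = k the
   assignment is drawn as above, conditioned on the typical UE having SC 1.
   Term k of Pr{L = l} = sum over assignments of the joint mass of
   {K0 = k, typical UE on SC 1 shared by exactly l other UEs}. *)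
Definition joint_term (N : nat) (tau : R) (l k : nat) : R :=
  sumR (enum {: asg N k})
    (fun a => if typ_sc1 a && (nb_sc1_others a == l)
              then Rmult (pK tau k)
                     (Rdiv (asg_prob a)
                        (sumR (enum {: asg N k})
                           (fun b => if typ_sc1 b then asg_prob b else R0)))
              else R0).

(* Write n = K0 + 1 for the number of UEs of the serving AP and n = q N + r
   with r < N.  The typical UE lies in block 0; every complete block other
   than block 0 contains exactly one UE on SC 1, and the incomplete last
   block (of size r) contains one with probability r / N.  Hence, given that
   the typical UE is on SC 1, the delay L is 0 if q = 0, and otherwise equals
   q with probability r / N and q - 1 with probability (N - r) / N
   ([delay_pmf]).  The stated case split is this law read off for every K0. *)

From HB Require Import structures.
From Pilot Require Import Defs.
From Stdlib Require Import Reals Lra FunctionalExtensionality.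
From mathcomp Require Import all_boot zify.

Set Implicit Arguments.
Unset Strict Implicit.
Unset Printing Implicit Defensive.

(* Real addition is a commutative monoid law, so that [sumR] is a big
   operator and the bigop lemmas (reindexing by permutation) apply. *)
Lemma Rplus_left_id : left_id R0 Rplus. Proof. move=> x; lra. Qed.
Lemma Rplus_assoc' : associative Rplus. Proof. move=> x y z; lra. Qed.
Lemma Rplus_comm' : commutative Rplus. Proof. move=> x y; lra. Qed.
HB.instance Definition _ :=
  Monoid.isComLaw.Build R R0 Rplus Rplus_assoc' Rplus_comm' Rplus_left_id.

Lemma sumR_big (T : Type) (s : seq T) f : sumR s f = \big[Rplus/R0]_(x <- s) f x.
Proof. by elim: s => [|x s IH] /=; rewrite ?big_nil ?big_cons // IH. Qed.

Lemma sumR_perm (T : eqType) (s1 s2 : seq T) f :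
  perm_eq s1 s2 -> sumR s1 f = sumR s2 f.
Proof. by move=> Hs; rewrite !sumR_big (perm_big _ Hs). Qed.

Lemma sumR_map (T U : Type) (s : seq T) (g : T -> U) f :
  sumR (map g s) f = sumR s (fun x => f (g x)).
Proof. by elim: s => //= x s ->. Qed.

Lemma sumR_cat (T : Type) (s1 s2 : seq T) f :
  sumR (s1 ++ s2) f = Rplus (sumR s1 f) (sumR s2 f).
Proof. elim: s1 => /= [|x s IH]; [lra | rewrite IH; lra]. Qed.

Lemma sumR_ext (T : Type) (s : seq T) f g :
  (forall x, f x = g x) -> sumR s f = sumR s g.
Proof. by move=> H; elim: s => //= x s ->; rewrite H. Qed.

Lemma sumR_ext_in (T : eqType) (s : seq T) f g :
  {in s, forall x, f x = g x} -> sumR s f = sumR s g.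
Proof.
elim: s => //= x s IH H; rewrite H ?mem_head // IH // => y Hy.
by apply: H; rewrite in_cons Hy orbT.
Qed.

Lemma sumR_add (T : Type) (s : seq T) f g :
  sumR s (fun x => Rplus (f x) (g x)) = Rplus (sumR s f) (sumR s g).
Proof. elim: s => /= [|x s ->]; lra. Qed.

Lemma sumR_scal (T : Type) (s : seq T) c f :
  sumR s (fun x => Rmult c (f x)) = Rmult c (sumR s f).
Proof. elim: s => /= [|x s ->]; lra. Qed.

Lemma sumR_0 (T : Type) (s : seq T) : sumR s (fun _ => R0) = R0.
Proof. elim: s => /= [|x s ->]; lra. Qed.

Lemma sumR_const_count (T : Type) (s : seq T) (P : pred T) c :
  sumR s (fun x => if P x then c else R0) = Rmult c (INR (count P s)).
Proof.
elim: s => /= [|x s ->]; first lra.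
by case: (P x); [rewrite (plus_INR 1) | rewrite (plus_INR 0)]; simpl; lra.
Qed.

Lemma prodR_map (T U : Type) (s : seq T) (g : T -> U) f :
  prodR (map g s) f = prodR s (fun x => f (g x)).
Proof. by elim: s => //= x s ->. Qed.

Lemma prodR_cat (T : Type) (s1 s2 : seq T) f :
  prodR (s1 ++ s2) f = Rmult (prodR s1 f) (prodR s2 f).
Proof. elim: s1 => /= [|x s IH]; [lra | rewrite IH; lra]. Qed.

Lemma prodR_ext_in (T : eqType) (s : seq T) f g :
  {in s, forall x, f x = g x} -> prodR s f = prodR s g.
Proof.
elim: s => //= x s IH H; rewrite H ?mem_head // IH // => y Hy.
by apply: H; rewrite in_cons Hy orbT.
Qed.

Lemma infinite_sum_finite (f : nat -> R) M :
  (forall k, M < k -> f k = R0) -> infinite_sum f (sum_f_R0 f M).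
Proof.
move=> Hf eps Heps; exists M => n /leP HMn.
have -> : sum_f_R0 f n = sum_f_R0 f M.
  rewrite -(subnKC HMn); elim: (n - M) => [|d IH]; first by rewrite addn0.
  by rewrite addnS /= IH Hf; [lra | lia].
by rewrite /R_dist Rminus_diag Rabs_R0.
Qed.

Lemma iota0S i : iota 0 i.+1 = rcons (iota 0 i) i.
Proof. by rewrite -addn1 iotaD cats1. Qed.

Lemma INR_sub1 a b c : a + b + 1 = c -> INR a = Rminus (Rminus (INR c) (INR b)) 1.
Proof. by move=> <-; rewrite !plus_INR /=; lra. Qed.

Lemma INR_add1 a b c : a + b = c.+1 -> INR a = Rplus (Rminus (INR c) (INR b)) 1.
Proof. by move=> /(f_equal INR); rewrite plus_INR S_INR; lra. Qed.

Lemma INR_Rdiv_self n : 0 < n -> Rdiv (INR n) (INR n) = R1.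
Proof. by move=> Hn; apply: Rinv_r; apply: not_0_INR; lia. Qed.

Lemma filter_iota_lt (P : pred nat) n i : i <= n ->
  [seq j <- iota 0 n | (j < i) && P j] = [seq j <- iota 0 i | P j].
Proof.
move=> Hi; rewrite -(subnKC Hi) iotaD filter_cat.
rewrite [X in _ ++ X](@eq_in_filter _ _ pred0) ?filter_pred0 ?cats0; last first.
  by move=> j; rewrite mem_iota => /andP[Hj _] /=; rewrite ltnNge Hj.
by apply: eq_in_filter => j; rewrite mem_iota => /andP[_ ->].
Qed.

Section Delay.
Variable N : nat.
Hypothesis N_gt0 : 0 < N.

Local Notation posN := (Defs.pos N).

Fixpoint words (n : nat) : seq (seq nat) :=
  if n is n'.+1 then [seq rcons s x | s <- words n', x <- iota 0 N]
  else [:: [::]].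

Lemma sumR_words_succ n f :
  sumR (words n.+1) f =
  sumR (words n) (fun s => sumR (iota 0 N) (fun x => f (rcons s x))).
Proof. by rewrite /=; elim: (words n) => //= s l IH; rewrite sumR_cat sumR_map IH. Qed.

Lemma mem_words n s : (s \in words n) = (size s == n) && all (fun x => x < N) s.
Proof.
elim: n s => [|n IH] s /=; first by rewrite in_cons in_nil orbF; case: s.
apply/allpairsP/idP.
  move=> [[s' x] /= [Hs Hx ->]]; move: Hs; rewrite IH => /andP[/eqP <- Ha].
  by rewrite size_rcons eqxx /= all_rcons Ha andbT; move: Hx; rewrite mem_iota; lia.
case/lastP: s => [|s x] //; rewrite size_rcons eqSS all_rcons.
move=> /andP[Hs /andP[Hx Ha]]; exists (s, x) => /=.
by split => //; [rewrite IH Hs Ha | rewrite mem_iota; lia].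
Qed.

Lemma uniq_words n : uniq (words n).
Proof.
elim: n => [|n IH] //=; apply: allpairs_uniq => //; first exact: iota_uniq.
by move=> [s x] [s' x'] _ _ /= /rcons_inj.
Qed.

Definition asg_seq (n : nat) (a : {ffun 'I_n -> 'I_N}) : seq nat :=
  [seq val (a i) | i <- enum 'I_n].

Lemma size_asg_seq n (a : {ffun 'I_n -> 'I_N}) : size (asg_seq a) = n.
Proof. by rewrite size_map size_enum_ord. Qed.

Lemma nth_asg_seq n (a : {ffun 'I_n -> 'I_N}) (i : 'I_n) :
  nth 0 (asg_seq a) i = val (a i).
Proof. by rewrite (nth_map i) ?size_enum_ord // nth_ord_enum. Qed.

Lemma asg_seq_inj n : injective (@asg_seq n).
Proof. by move=> a b H; apply/ffunP => i; apply: val_inj; rewrite -!nth_asg_seq H. Qed.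

(* [asg_seq] is a bijection from assignments onto [words n]. *)
Lemma sumR_asg n (F : seq nat -> R) :
  sumR (enum {: {ffun 'I_n -> 'I_N}}) (fun a => F (asg_seq a)) = sumR (words n) F.
Proof.
rewrite -sumR_map; apply: sumR_perm; apply: uniq_perm; last 1 first.
- move=> s; rewrite mem_words; apply/mapP/idP.
    move=> [a _ ->]; rewrite size_asg_seq eqxx /=.
    by apply/allP => x /mapP[i _ ->]; exact: ltn_ord.
  move=> /andP[/eqP Hs Ha].
  exists [ffun i : 'I_n => insubd (Ordinal N_gt0) (nth 0 s i)]; first by rewrite mem_enum.
  apply: (@eq_from_nth _ 0); first by rewrite size_asg_seq.
  move=> i; rewrite Hs => Hi.
  rewrite (nth_asg_seq _ (Ordinal Hi)) ffunE insubdK //=.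
  by move/allP: Ha; apply; apply: mem_nth; rewrite Hs.
- by rewrite map_inj_uniq ?enum_uniq //; exact: asg_seq_inj.
- exact: uniq_words.
Qed.

(* The scheduling model on lists: [usedL s i] are the SCs taken before UE i
   in its block, [probL s] the probability of the list, [cntL s] the number
   of other UEs on SC 1, and [busy s] tells whether SC 1 is already taken in
   the block of the next UE (index [size s]). *)
Definition usedL (s : seq nat) (i : nat) : seq nat :=
  [seq nth 0 s j | j <- iota 0 i & blk N j == blk N i].
Definition stepL (s : seq nat) (i : nat) : R :=
  if nth 0 s i \in usedL s i then R0 else Rinv (INR (N - posN i)).
Definition probL (s : seq nat) : R := prodR (iota 0 (size s)) (stepL s).
Definition cntL (s : seq nat) : nat :=
  count (fun j => (j != 0) && (nth 0 s j == 0)) (iota 0 (size s)).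
Definition busy (s : seq nat) : bool := 0 \in usedL s (size s).

Lemma used_asg_seq K0 (a : asg N K0) (i : 'I_K0.+1) :
  map val (used a i) = usedL (asg_seq a) i.
Proof.
rewrite /used /usedL -map_comp.
rewrite (@eq_map _ _ _ (fun j : 'I_K0.+1 => nth 0 (asg_seq a) j)); last first.
  by move=> j /=; rewrite nth_asg_seq.
rewrite (map_comp (nth 0 (asg_seq a)) val).
rewrite -(@filter_map _ _ val (fun j => (j < i) && (blk N j == blk N i))) val_enum_ord.
by rewrite (filter_iota_lt (fun j => blk N j == blk N i)) // ltnW.
Qed.

Lemma asg_prob_seq K0 (a : asg N K0) : asg_prob a = probL (asg_seq a).
Proof.
rewrite /asg_prob /probL size_asg_seq -val_enum_ord prodR_map.
apply: prodR_ext_in => i _.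
by rewrite /step_prob /stepL nth_asg_seq -used_asg_seq (mem_map val_inj).
Qed.

Lemma typ_sc1_seq K0 (a : asg N K0) : typ_sc1 a = (nth 0 (asg_seq a) 0 == 0).
Proof. by rewrite /typ_sc1 (nth_asg_seq a ord0). Qed.

Lemma nb_sc1_seq K0 (a : asg N K0) : nb_sc1_others a = cntL (asg_seq a).
Proof.
rewrite /nb_sc1_others /cntL size_asg_seq -val_enum_ord [RHS]count_map.
by apply: eq_count => i /=; rewrite nth_asg_seq.
Qed.

Lemma usedL_succ s i :
  usedL s i.+1 = if N %| i.+1 then [::] else rcons (usedL s i) (nth 0 s i).
Proof.
rewrite /usedL iota0S filter_rcons /blk divnS //.
case: (N %| i.+1) => /=; last by rewrite !add0n eqxx map_rcons.
have -> : (i %/ N == 1 + i %/ N) = false by lia.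
rewrite (@eq_in_filter _ _ pred0) ?filter_pred0 // => j; rewrite mem_iota /= add0n.
by move=> /ltnW/(leq_div2r N); lia.
Qed.

Lemma usedL_rcons s x i : i <= size s -> usedL (rcons s x) i = usedL s i.
Proof.
move=> Hi; apply/eq_in_map => j; rewrite mem_filter mem_iota add0n => /andP[_ Hj].
by rewrite nth_rcons (leq_trans Hj Hi).
Qed.

Lemma probL_rcons s x : probL (rcons s x) =
  Rmult (probL s)
        (if x \in usedL s (size s) then R0 else Rinv (INR (N - posN (size s)))).
Proof.
rewrite /probL size_rcons iota0S -cats1 prodR_cat /= Rmult_1_r; congr Rmult.
  apply: prodR_ext_in => i; rewrite mem_iota => /andP[_ Hi].
  by rewrite /stepL (usedL_rcons x (ltnW Hi)) nth_rcons Hi.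
by rewrite /stepL (usedL_rcons x (leqnn _)) nth_rcons ltnn eqxx.
Qed.

Lemma cntL_rcons s x : cntL (rcons s x) = cntL s + ((size s != 0) && (x == 0)).
Proof.
rewrite /cntL size_rcons iota0S -[rcons (iota _ _) _]cats1 count_cat /= nth_rcons ltnn eqxx addn0.
by congr addn; apply: eq_in_count => j; rewrite mem_iota => /andP[_ Hj]; rewrite nth_rcons Hj.
Qed.

Lemma busy_rcons s x : busy (rcons s x) = ~~ (N %| (size s).+1) && (busy s || (x == 0)).
Proof.
rewrite /busy size_rcons usedL_succ usedL_rcons // nth_rcons ltnn eqxx.
by case: (N %| _) => //=; rewrite mem_rcons in_cons orbC eq_sym.
Qed.

Lemma usedL_invariant s :
  probL s <> R0 -> uniq (usedL s (size s)) /\ size (usedL s (size s)) = posN (size s).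
Proof.
elim/last_ind: s => [|s x IH] Hs; first by rewrite /usedL /Defs.pos mod0n.
have [Hs' Hx] : probL s <> R0 /\ x \notin usedL s (size s).
  move: Hs; rewrite probL_rcons; case: (x \in _); first by rewrite Rmult_0_r.
  by move=> H; split => // H0; apply: H; rewrite H0 Rmult_0_l.
have [U1 U2] := IH Hs'.
rewrite size_rcons usedL_succ usedL_rcons // nth_rcons ltnn eqxx /Defs.pos modnS.
by case: (N %| (size s).+1) => //; rewrite rcons_uniq Hx U1 size_rcons U2.
Qed.

Lemma sumR_free (U : seq nat) (al be : R) : uniq U -> all (fun x => x < N) U ->
  sumR (iota 0 N) (fun x => if x \in U then R0 else if x == 0 then al else be) =
  Rplus (if 0 \in U then R0 else al) (Rmult be (INR (N - size U - (0 \notin U)))).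
Proof.
move=> HU Ha.
have Hc : count (mem U) (iota 0 N) = size U.
  rewrite -size_filter; apply/perm_size/uniq_perm => //; first exact/filter_uniq/iota_uniq.
  move=> y; rewrite mem_filter mem_iota /=; apply/andP/idP => [[] //| Hy].
  by split => //; move/allP: Ha => /(_ y Hy).
have EN : N = N.-1.+1 by lia.
rewrite EN /= in Hc *; congr Rplus.
rewrite (@sumR_ext_in _ _ _ (fun x => if predC (mem U) x then be else R0)); last first.
  move=> y; rewrite mem_iota => /andP[Hy _] /=.
  by case: (y \in U) => //=; case: eqP => // E; rewrite E in Hy.
rewrite sumR_const_count; congr (Rmult _ (INR _)).
have := count_predC (mem U) (iota 1 N.-1); rewrite size_iota.
by move: Hc; rewrite -EN; case: (0 \in U) => /=; lia.
Qed.

(* Extending a list by one UE: the total weight of the extensions whose new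
   SC satisfies [g (x == 0)] is expressed through [busy s] only. *)
Lemma sumR_extend s (g : bool -> bool) : 0 < size s -> all (fun x => x < N) s ->
  sumR (iota 0 N) (fun x => if g (x == 0) then probL (rcons s x) else R0) =
  Rmult (probL s)
    (Rplus (if busy s then R0 else if g true then Rinv (INR (N - posN (size s))) else R0)
           (Rmult (INR (N - posN (size s) - ~~ busy s))
                  (if g false then Rinv (INR (N - posN (size s))) else R0))).
Proof.
move=> Hs Ha; set v := Rinv (INR (N - posN (size s))).
have [H0 | H0] := Req_dec (probL s) R0.
  rewrite H0 Rmult_0_l (@sumR_ext _ _ _ (fun _ => R0)) ?sumR_0 // => x.
  by rewrite probL_rcons H0 Rmult_0_l; case: (g _).
have [U1 U2] := usedL_invariant H0.
pose F x := if x \in usedL s (size s) then R0 else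
            if x == 0 then (if g true then v else R0) else (if g false then v else R0).
rewrite (@sumR_ext _ _ _ (fun x => Rmult (probL s) (F x))); last first.
  by move=> x; rewrite probL_rcons /F /v; case: (x \in _); case: (x == 0); case: (g _); lra.
rewrite sumR_scal sumR_free //; last first.
  apply/allP => y /mapP[j _ ->]; case: (ltnP j (size s)) => Hj; last by rewrite nth_default.
  by move/allP: Ha; apply; apply: mem_nth.
by rewrite U2 /busy; congr (Rmult _ (Rplus _ _)); apply: Rmult_comm.
Qed.

Definition weight (n c : nat) (h : bool) : R :=
  sumR (words n) (fun s =>
    if (nth 0 s 0 == 0) && (cntL s == c) && (busy s == h) then probL s else R0).
Definition mass (n : nat) : R :=
  sumR (words n) (fun s => if nth 0 s 0 == 0 then probL s else R0).

(* One step of the dynamic programme, for a new UE at block position p,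
   where d tells whether the new UE closes its block.  If SC 1 is free, the
   new UE takes it with probability 1 / (N - p); otherwise it takes one of
   the remaining free SCs. *)
Definition transition (d : bool) (p : nat) (A : nat -> bool -> R)
    (c' : nat) (h' : bool) : R :=
  Rplus (Rmult (if ~~ d == h' then Rinv (INR (N - p)) else R0)
               (if c' is c.+1 then A c false else R0))
  (Rplus (Rmult (if ~~ d == h' then Rmult (INR (N - p)) (Rinv (INR (N - p))) else R0)
                (A c' true))
         (Rmult (if false == h' then Rmult (INR (N - p - 1)) (Rinv (INR (N - p))) else R0)
                (A c' false))).

Lemma weight_succ n : 0 < n ->
  forall c h, weight n.+1 c h = transition (N %| n.+1) (posN n) (weight n) c h.
Proof.
move=> Hn c' h'; rewrite /weight /transition sumR_words_succ.
set d := N %| n.+1; set v := Rinv (INR (N - posN n)).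
have -> : forall F : nat -> seq nat -> R,
    (if c' is c.+1 then sumR (words n) (F c) else R0) =
    sumR (words n) (fun s => if c' is c.+1 then F c s else R0).
  by move=> F; case: c' => [|c] //; rewrite sumR_0.
rewrite -!sumR_scal -!sumR_add; apply: sumR_ext_in => s.
rewrite mem_words => /andP[/eqP Hs Ha].
pose G (b : bool) :=
  (nth 0 s 0 == 0) && (cntL s + b == c') && ((~~ d && (busy s || b)) == h').
rewrite (@sumR_ext _ _ _ (fun x => if G (x == 0) then probL (rcons s x) else R0)); last first.
  move=> x; rewrite nth_rcons Hs Hn cntL_rcons busy_rcons Hs.
  by have -> : (n != 0) = true by lia.
rewrite sumR_extend ?Hs // -/v /G; clear G.
case: (nth 0 s 0 == 0); last by case: (busy s); case: c' => [|c] /=; lra.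
case: (busy s) => /=; rewrite ?andbF ?andbT.
  rewrite subn0 addn0.
  by case: c' => [|c] /=; case: (cntL s == _); case: (~~ d == h'); rewrite /= ?andbF; ring.
rewrite addn0 addn1; case: c' => [|c] /=.
  by case: (cntL s == 0); case: (false == h'); rewrite /=; ring.
rewrite eqSS; case: (eqVneq (cntL s) c) => [->|Hc].
  have -> : (c == c.+1) = false by lia.
  by case: (~~ d == h'); case: (false == h'); rewrite /= ?andbF; ring.
by case: (cntL s == c.+1); case: (false == h'); case: (~~ d == h'); rewrite /= ?andbF; ring.
Qed.

(* Each later UE keeps the first UE's probability: the steps sum to one. *)
Lemma mass_succ n : 0 < n -> mass n.+1 = mass n.
Proof.
move=> Hn; rewrite /mass sumR_words_succ; apply: sumR_ext_in => s.
rewrite mem_words => /andP[/eqP Hs Ha].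
pose G (b : bool) := nth 0 s 0 == 0.
rewrite (@sumR_ext _ _ _ (fun x => if G (x == 0) then probL (rcons s x) else R0)); last first.
  by move=> x; rewrite nth_rcons Hs Hn.
rewrite sumR_extend ?Hs // /G; clear G.
case: (nth 0 s 0 == 0); last by case: (busy s); lra.
have Hp : (posN n < N)%coq_nat by apply/ltP; exact: ltn_pmod.
have Hv : Rlt 0 (INR (N - posN n)) by apply/lt_0_INR; lia.
have Hne : INR (N - posN n) <> R0 by lra.
case: (busy s) => /=; first by rewrite subn0 Rinv_r // Rplus_0_l Rmult_1_r.
have -> : INR (N - posN n - 1) = Rminus (INR (N - posN n)) R1.
  by rewrite minus_INR //; apply/leP; lia.
by field.
Qed.

Lemma sumR_words1 (F : seq nat -> R) :
  (forall x, 0 < x -> F [:: x] = R0) -> sumR (words 1) F = F [:: 0].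
Proof.
move=> H; rewrite sumR_words_succ /= Rplus_0_r -{1}(prednK N_gt0) /=.
rewrite (@sumR_ext_in _ _ _ (fun _ => R0)) ?sumR_0 ?Rplus_0_r //.
by move=> x; rewrite mem_iota => /andP[Hx _]; apply: H.
Qed.

Lemma probL_single : probL [:: 0] = Rinv (INR N).
Proof. by rewrite /probL /= /stepL /= /Defs.pos mod0n subn0 Rmult_1_r. Qed.

Lemma weight1 c h :
  weight 1 c h = if (c == 0) && (h == ~~ (N %| 1)) then Rinv (INR N) else R0.
Proof.
rewrite /weight sumR_words1 /=; last by move=> x Hx; have -> : (x == 0) = false by lia.
have -> : busy [:: 0] = ~~ (N %| 1) by rewrite /busy /= usedL_succ; case: (N %| 1).
by rewrite probL_single (eq_sym 0 c) (eq_sym _ h).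
Qed.

Lemma mass_closed n : mass n.+1 = Rinv (INR N).
Proof.
elim: n => [|n IH]; last by rewrite mass_succ.
rewrite /mass sumR_words1 /= ?probL_single //.
by move=> x Hx; have -> : (x == 0) = false by lia.
Qed.

(* Closed form of [weight n] with n = q N + r, r < N. *)
Definition weight_form (q r c : nat) (h : bool) : R :=
  if q == 0 then (if h && (c == 0) then Rinv (INR N) else R0)
  else if h then (if c == q then Rdiv (INR r) (Rmult (INR N) (INR N)) else R0)
  else (if c == q.-1 then Rdiv (INR (N - r)) (Rmult (INR N) (INR N)) else R0).

Ltac case_eqs :=
  repeat match goal with |- context [ (?a == ?b) ] => case: (@eqP _ a b) => ? end.

(* [weight_form] satisfies the recursion inside a block ... *)
Lemma weight_form_step q r : r.+1 < N -> (q != 0) || (r != 0) ->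
  forall c h, weight_form q r.+1 c h = transition false r (weight_form q r) c h.
Proof.
move=> Hr Hqr c' h'.
have HN : Rlt 0 (INR N) by apply: lt_0_INR; apply/ltP; lia.
have E1 : INR (N - r) = Rminus (INR N) (INR r) by rewrite minus_INR //; apply/leP; lia.
have E2 : INR (N - r - 1) = Rminus (Rminus (INR N) (INR r)) 1.
  by rewrite minus_INR ?E1 //; apply/leP; lia.
have E3 : INR (N - r.+1) = Rminus (Rminus (INR N) (INR r)) 1 by rewrite -E2; congr INR; lia.
have Hlt : Rlt (INR r.+1) (INR N) by apply: lt_INR; apply/ltP.
rewrite S_INR in Hlt.
rewrite /weight_form /transition E1 E2 E3 S_INR.
by case: h'; case: c' => [|c] /=; case_eqs; subst => /=; try lia; field; lra.
Qed.

(* ... and across a block boundary. *)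
Lemma weight_form_step_boundary q r : r.+1 = N ->
  forall c h, weight_form q.+1 0 c h = transition true r (weight_form q r) c h.
Proof.
move=> Hr c' h'.
have HN : Rlt 0 (INR N) by apply: lt_0_INR; apply/ltP; lia.
have E1 : INR (N - r) = R1 by rewrite -Hr subSnn.
have E2 : INR (N - r - 1) = R0 by rewrite -Hr subSnn.
have E3 : INR r = Rminus (INR N) R1 by rewrite -Hr S_INR; lra.
rewrite /weight_form /transition E1 E2 E3 subn0; clear Hr E1 E2 E3.
by case: h'; case: c' => [|c] /=; case_eqs; subst => /=; try lia; field; lra.
Qed.

Lemma transition_ext d p (A B : nat -> bool -> R) :
  (forall c h, A c h = B c h) -> forall c h, transition d p A c h = transition d p B c h.
Proof. by move=> E c h; rewrite /transition; case: c => [|c]; rewrite !E. Qed.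

(* Induction on the number of UEs, matching the two recursions. *)
Lemma weight_closed n c h : weight n.+1 c h = weight_form (n.+1 %/ N) (n.+1 %% N) c h.
Proof.
elim: n c h => [|n IH] c h.
  rewrite weight1 /weight_form; have [HN1 | HN1] : N = 1 \/ 1 < N by lia.
    rewrite HN1 divn1 modn1 /= /Rdiv Rmult_1_r Rinv_1.
    by case: h; case: c => [|[|c]] /=; rewrite ?Rmult_0_l ?Rmult_1_l.
  rewrite divn_small // modn_small //=.
  have -> : (N %| 1) = false by rewrite dvdn1; lia.
  by case: h; case: (c == 0).
rewrite weight_succ // (transition_ext _ _ IH) /Defs.pos.
set q := n.+1 %/ N; set r := n.+1 %% N.
have Hq : n.+1 = q * N + r := divn_eq _ _.
have Hr2 := divn_eq n.+2 N; have Hr2' := ltn_pmod n.+2 N_gt0.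
rewrite (divnS _ N_gt0) (modnS n.+1 N) -/q -/r in Hr2 Hr2' *.
case Hd : (N %| n.+2) => /=; symmetry.
  by apply: weight_form_step_boundary; move: Hr2; rewrite Hd add1n mulSn; lia.
apply: weight_form_step; first by move: Hr2'; rewrite Hd.
by apply/orP; case: (q =P 0) => Hq0; [right; apply/eqP => Hr0 | left; apply/eqP]; lia.
Qed.

Definition delay_pmf (n l : nat) : R :=
  if n %/ N == 0 then (if l == 0 then R1 else R0)
  else Rplus (if l == n %/ N then Rdiv (INR (n %% N)) (INR N) else R0)
             (if l == (n %/ N).-1 then Rdiv (INR (N - n %% N)) (INR N) else R0).

Lemma PrA_closed K0 l : PrA N K0 l = delay_pmf K0.+1 l.
Proof.
have HN : Rlt 0 (INR N) by apply: lt_0_INR; apply/ltP.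
rewrite /PrA.
have -> : sumR (enum {: asg N K0}) (fun a =>
    if typ_sc1 a && (nb_sc1_others a == l) then asg_prob a else R0) =
    Rplus (weight K0.+1 l true) (weight K0.+1 l false).
  rewrite /weight -sumR_add -sumR_asg; apply: sumR_ext => a.
  rewrite typ_sc1_seq nb_sc1_seq asg_prob_seq.
  by case: (busy _); case: (_ && _); rewrite /= ?andbT ?andbF; lra.
have -> : sumR (enum {: asg N K0}) (fun a => if typ_sc1 a then asg_prob a else R0) =
    mass K0.+1.
  by rewrite /mass -sumR_asg; apply: sumR_ext => a; rewrite typ_sc1_seq asg_prob_seq.
rewrite mass_closed !weight_closed /weight_form /delay_pmf.
by case_eqs; rewrite /=; field; lra.
Qed.

Lemma divmod_eq q r n : r < N -> n = q * N + r -> n %/ N = q /\ n %% N = r.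
Proof.
by move=> Hr ->; rewrite divnMDl // divn_small // addn0 modnMDl modn_small.
Qed.

Lemma delay_pmf_high n l : l.+2 <= n %/ N -> delay_pmf n l = R0.
Proof.
move=> Hl; rewrite /delay_pmf.
have -> : (n %/ N == 0) = false by lia.
have -> : (l == n %/ N) = false by lia.
have -> : (l == (n %/ N).-1) = false by lia.
by rewrite /=; lra.
Qed.

Lemma delay_pmf_low n l : 0 < l -> n <= l * N -> delay_pmf n l = R0.
Proof.
move=> Hl Hn.
have Hq : n %/ N <= l by have := leq_div2r N Hn; rewrite mulnK.
have Hr : n %/ N = l -> n %% N = 0 by have := divn_eq n N; lia.
rewrite /delay_pmf; case: eqP => Hq0 /=; first by have -> : (l == 0) = false by lia.
have -> : (l == (n %/ N).-1) = false by lia.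
case: eqP => [E|_]; last by lra.
by rewrite Hr // /Rdiv Rmult_0_l; lra.
Qed.

Lemma delay_pmf_alone r : r < N -> delay_pmf r 0 = R1.
Proof. by move=> Hr; rewrite /delay_pmf divn_small. Qed.

Lemma delay_pmf_curr q r : 0 < q -> r < N -> delay_pmf (q * N + r) q = Rdiv (INR r) (INR N).
Proof.
move=> Hq Hr; rewrite /delay_pmf; have [-> ->] := @divmod_eq q r _ Hr erefl.
have -> : (q == 0) = false by lia.
have -> : (q == q.-1) = false by lia.
by rewrite eqxx /=; lra.
Qed.

Lemma delay_pmf_prev q r : r < N -> delay_pmf (q.+1 * N + r) q = Rdiv (INR (N - r)) (INR N).
Proof.
move=> Hr; rewrite /delay_pmf; have [-> ->] := @divmod_eq q.+1 r _ Hr erefl.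
have -> : (q == q.+1) = false by lia.
by rewrite eqxx /=; lra.
Qed.

Lemma PrA_no_delay K0 :
  (K0 <= N - 1 -> PrA N K0 0 = R1) /\
  (N <= K0 <= 2 * N - 2 ->
     PrA N K0 0 = Rdiv (Rminus (Rminus (INR (2 * N)) (INR K0)) 1) (INR N)) /\
  (2 * N - 1 <= K0 -> PrA N K0 0 = R0).
Proof.
rewrite !PrA_closed; split; [|split].
- move=> HK; case: (ltnP K0.+1 N) => HK1; first exact: delay_pmf_alone.
  have -> : K0.+1 = 1 * N + 0 by lia.
  by rewrite delay_pmf_prev // subn0 INR_Rdiv_self.
- move=> /andP[H1 H2]; have -> : K0.+1 = 1 * N + (K0.+1 - N) by lia.
  by rewrite delay_pmf_prev; [rewrite (@INR_sub1 _ K0 (2 * N)) // | ]; lia.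
- by move=> HK; rewrite delay_pmf_high // leq_divRL //; lia.
Qed.

Lemma PrA_delay l K0 : 1 <= l ->
  (K0 <= l * N - 1 -> PrA N K0 l = R0) /\
  (l * N <= K0 <= (l + 1) * N - 1 ->
     PrA N K0 l = Rdiv (Rplus (Rminus (INR K0) (INR (l * N))) 1) (INR N)) /\
  ((l + 1) * N <= K0 <= (l + 2) * N - 2 ->
     PrA N K0 l = Rdiv (Rminus (Rminus (INR ((l + 2) * N)) (INR K0)) 1) (INR N)) /\
  ((l + 2) * N - 1 <= K0 -> PrA N K0 l = R0).
Proof.
move=> Hl; have HlN : 0 < l * N by rewrite muln_gt0 Hl N_gt0.
rewrite !PrA_closed; split; [|split; [|split]].
- by move=> HK; apply: delay_pmf_low; lia.
- move=> /andP[H1 H2]; case: (ltnP K0.+1 ((l + 1) * N)) => HK1.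
    have -> : K0.+1 = l * N + (K0.+1 - l * N) by lia.
    by rewrite delay_pmf_curr; [rewrite (@INR_add1 _ (l * N) K0) // | | ]; lia.
  have -> : K0.+1 = l.+1 * N + 0 by rewrite -addn1; lia.
  rewrite delay_pmf_prev // subn0 -(@INR_add1 N (l * N) K0); last by rewrite -addn1 in HK1; lia.
  by rewrite INR_Rdiv_self.
- move=> /andP[H1 H2]; have -> : K0.+1 = l.+1 * N + (K0.+1 - (l + 1) * N) by rewrite -addn1; lia.
  by rewrite delay_pmf_prev; [rewrite (@INR_sub1 _ K0 ((l + 2) * N)) // | ]; lia.
- by move=> HK; rewrite delay_pmf_high // leq_divRL //; lia.
Qed.

Lemma PrA_vanish l k : (l + 2) * N < k -> PrA N k l = R0.
Proof. by move=> Hk; rewrite PrA_closed delay_pmf_high // leq_divRL //; lia. Qed.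

End Delay.

Lemma joint_term_E N tau l k : joint_term N tau l k = Rmult (pK tau k) (PrA N k l).
Proof.
rewrite /joint_term /PrA.
set D := sumR _ (fun b => if typ_sc1 b then asg_prob b else R0).
rewrite (@sumR_ext _ _ _ (fun a => Rmult (Rmult (pK tau k) (Rinv D))
   (if typ_sc1 a && (nb_sc1_others a == l) then asg_prob a else R0))).
  rewrite sumR_scal /Rdiv Rmult_assoc; congr (Rmult _ _); apply: Rmult_comm.
by move=> a; case: (_ && _); rewrite /Rdiv; ring.
Qed.

Theorem lemma5 (N : nat) (HN : 0 < N) :
  (* l = 0 *)
  (forall K0 : nat,
     (K0 <= N - 1 -> PrA N K0 0 = R1) /\
     (N <= K0 <= 2 * N - 2 ->
        PrA N K0 0 = Rdiv (Rminus (Rminus (INR (2 * N)) (INR K0)) 1) (INR N)) /\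
     (2 * N - 1 <= K0 -> PrA N K0 0 = R0)) /\
  (* l >= 1 *)
  (forall l K0 : nat, 1 <= l ->
     (K0 <= l * N - 1 -> PrA N K0 l = R0) /\
     (l * N <= K0 <= (l + 1) * N - 1 ->
        PrA N K0 l = Rdiv (Rplus (Rminus (INR K0) (INR (l * N))) 1) (INR N)) /\
     ((l + 1) * N <= K0 <= (l + 2) * N - 2 ->
        PrA N K0 l = Rdiv (Rminus (Rminus (INR ((l + 2) * N)) (INR K0)) 1) (INR N)) /\
     ((l + 2) * N - 1 <= K0 -> PrA N K0 l = R0)) /\
  (* total probability with K0 ~ pK tau *)
  (forall (tau : R), Rlt 0 tau -> forall l : nat,
     exists p : R,
       infinite_sum (joint_term N tau l) p /\
       infinite_sum (fun k => Rmult (pK tau k) (PrA N k l)) p).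
Proof.
split; first exact: PrA_no_delay.
split; first exact: PrA_delay.
move=> tau _ l.
have Hfinite : forall k, (l + 2) * N < k -> Rmult (pK tau k) (PrA N k l) = R0.
  by move=> k Hk; rewrite PrA_vanish // Rmult_0_r.
exists (sum_f_R0 (fun k => Rmult (pK tau k) (PrA N k l)) ((l + 2) * N)).
rewrite (functional_extensionality _ _ (joint_term_E N tau l)).
by split; apply: infinite_sum_finite.
Qed.
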